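(* Let $T\ge1$ be an integer, $\tau\in(0,1)$, $\beta\in(0,1)$, and let $R_f>0$ be a risk-free gross rate. Let $R_1,\dots,R_T$ be independent real random variables (gross risky returns). An investor with wealth $W_t>0$ chooses at each $t=0,\dots,T-1$ a risky share $\alpha_t\in[0,1]$, and wealth evolves as $W_{t+1}=W_t\big(\alpha_tR_{t+1}+(1-\alpha_t)R_f\big)$. Define the value recursively by $v^*_\tau(W_T)=W_T$ and, for $t=T-1,\dots,0$, $$v^*_\tau(W_t)=\max_{\alpha_t\in[0,1]}Q_\tau\big[\beta\,v^*_\tau(W_{t+1})\,\big|\,W_t\big].$$ Let $m_k=\max(Q_\tau[R_k],R_f)$. Then for every $t=0,\dots,T-1$, $$v^*_\tau(W_t)=\beta^{T-t}\,W_t\prod_{k=t+1}^{T}m_k,$$ and the optimal allocation is $\alpha^*_t=1$ if $Q_\tau[R_{t+1}]>R_f$, $\alpha^*_t=0$ if $Q_\tau[R_{t+1}]<R_f$, and any $\alpha_t\in[0,1]$ is optimal if $Q_\tau[R_{t+1}]=R_f$.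
   Context: For a real random variable $Z$ with CDF $F_Z$, $Q_\tau[Z]=\inf\{x\in\mathbb{R}: F_Z(x)\ge\tau\}$, and $Q_\tau[\,\cdot\mid W_t]$ denotes the $\tau$-quantile of the conditional law given current wealth $W_t$. *)

From HB Require Import structures.
From mathcomp Require Import all_boot all_order all_algebra.
From mathcomp Require Import all_classical all_reals all_analysis.
Set Implicit Arguments. Unset Strict Implicit. Unset Printing Implicit Defensive.
Import Order.TTheory GRing.Theory Num.Theory.
Local Open Scope classical_set_scope.
Local Open Scope ring_scope.

Definition quantile d (Om : measurableType d) (R : realType)
  (P : probability Om R) (tau : R) (Z : Om -> R) : R :=
  inf [set x : R | (tau%:E <= P [set w | (Z w <= x)%R])%E].

(* Mutual independence of the real random variables X_1, ..., X_n
   (product rule for preimages of arbitrary Borel sets; taking B_k = setT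
   recovers every subfamily). *)
Definition mutually_independent d (Om : measurableType d) (R : realType)
  (P : probability Om R) (n : nat) (X : nat -> {RV P >-> R}) : Prop :=
  forall B : nat -> set R, (forall k, measurable (B k)) ->
    P (\bigcap_(k in [set k | (1 <= k <= n)%N]) (X k @^-1` B k)) =
    (\prod_(1 <= k < n.+1) P (X k @^-1` B k))%E.

(* Value function by backward recursion on the number of remaining periods.
   vrem 0 w = w (terminal value v_T(W_T) = W_T); with n+1 periods remaining,
   i.e. at time t = Tn - (n+1), the next return is R_{t+1} = R_{Tn - n} and
     v_t(w) = max_{a in [0,1]} Q_tau[ beta v_{t+1}(w (a R_{t+1} + (1-a) Rf)) | W_t = w ].
   Since R_{t+1} is independent of W_t (a function of R_1..R_t), the
   conditional law given W_t = w is the law of the expression with W_t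
   replaced by the constant w. *)
Section Value.
Context d (Om : measurableType d) (R : realType) (P : probability Om R)
  (Tn : nat) (tau beta Rf : R) (Rs : nat -> {RV P >-> R}).

Fixpoint vrem (n : nat) : R -> R :=
  match n with
  | 0%N => fun w => w
  | n'.+1 => fun w =>
      sup [set y : R | exists2 a : R, 0 <= a <= 1 &
        y = quantile P tau
              (fun om => beta * vrem n' (w * (a * Rs (Tn - n') om + (1 - a) * Rf)))]
  end.

Definition vstar (t : nat) : R -> R := vrem (Tn - t).

Definition objective (t : nat) (a w : R) : R :=
  quantile P tau (fun om => beta * vstar t.+1 (w * (a * Rs t.+1 om + (1 - a) * Rf))).
End Value.

From HB Require Import structures.
From mathcomp Require Import all_boot all_order all_algebra.
From mathcomp Require Import all_classical all_reals all_analysis.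
From mathcomp Require Import lra.
Set Implicit Arguments. Unset Strict Implicit. Unset Printing Implicit Defensive.
Import Order.TTheory GRing.Theory Num.Theory.
Local Open Scope classical_set_scope.
Local Open Scope ring_scope.

(* The quantile commutes with nondecreasing affine maps of a random variable.
   Hence, by backward induction, the value with n periods remaining is linear
   in wealth, v(w) = K_n w with K_n > 0, and the one-period objective becomes
   beta K_n w (a Q_tau[R_{t+1}] + (1 - a) R_f): affine in the allocation a.  Its maximum over [0, 1] is
   beta K_n w max(Q_tau[R_{t+1}], R_f), attained exactly at the endpoint
   selected by the sign of Q_tau[R_{t+1}] - R_f, or everywhere when it is 0. *)

Section Quantile.
Context (R : realType) (d : measure_display) (Om : measurableType d)
  (P : probability Om R) (tau : R).

Definition quantile_set (Z : Om -> R) : set R :=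
  [set x : R | (tau%:E <= P [set w | (Z w <= x)%R])%E].

Lemma quantileE (Z : Om -> R) : quantile P tau Z = inf (quantile_set Z).
Proof. by []. Qed.

Lemma quantile_set_neq0 (Z : {RV P >-> R}) : tau < 1 -> quantile_set Z !=set0.
Proof.
move=> tau_lt1.
have [M [_ cdfM]] : \forall x \near +oo, (tau%:E < cdf Z x)%E.
  by apply: (cvg_cdfy1 Z (open_ereal_gt' _)); rewrite lte_fin.
exists (M + 1); apply/ltW.
have := cdfM (M + 1); rewrite ltrDl ltr01 => /(_ isT).
rewrite /cdf /distribution /pushforward.
suff -> : Z @^-1` `]-oo, M + 1] = [set w | (Z w <= M + 1)%R] by [].
by apply/seteqP; split=> w /=; rewrite in_itv.
Qed.

Lemma quantile_set_lbound (Z : Om -> R) (l : R) : 0 < tau ->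
  (forall om, l <= Z om) -> lbound (quantile_set Z) l.
Proof.
move=> tau_gt0 Zl x; apply: contraPP => /negP.
rewrite -ltNge /quantile_set /= => xl.
suff -> : [set w | (Z w <= x)%R] = set0.
  by rewrite measure0 lee_fin leNgt tau_gt0.
by apply/seteqP; split=> w //=; apply/negP; rewrite -ltNge (lt_le_trans xl).
Qed.

Lemma quantile_cst (c : R) : 0 < tau <= 1 -> quantile P tau (fun=> c) = c.
Proof.
case/andP=> tau_gt0 tau_le1.
rewrite quantileE.
suff -> : quantile_set (fun=> c) = `[c, +oo[%classic by rewrite inf_itv.
apply/seteqP; split=> x; rewrite /quantile_set /= in_itv /= andbT.
  apply: contraPP => /negP; rewrite -ltNge => xc.
  by move/(@quantile_set_lbound _ c tau_gt0 (fun=> lexx c)); rewrite leNgt xc.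
move=> cx; suff -> : [set _ : Om | (c <= x)%R] = setT.
  by rewrite probability_setT lee_fin.
by apply/seteqP; split.
Qed.

Lemma quantile_pos_affine (Z : Om -> R) (k e : R) : 0 < k ->
  quantile_set Z !=set0 -> has_lbound (quantile_set Z) ->
  quantile P tau (fun om => k * Z om + e) = k * quantile P tau Z + e.
Proof.
move=> k_gt0 ne lb; rewrite !quantileE.
set S := quantile_set Z; set S' := quantile_set _.
have S'E x : S' x = S ((x - e) / k).
  rewrite /S' /S /quantile_set /=; congr (_ <= P _)%E.
  by apply/seteqP; split=> w /=; rewrite ler_pdivlMr // -lerBrDr mulrC.
have SS' y : S y -> S' (k * y + e).
  by rewrite S'E addrK mulrAC divff ?gt_eqF ?mul1r.
have lb' : has_lbound S'.
  case: lb => l Sl; exists (k * l + e) => x; rewrite S'E => /Sl.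
  by rewrite ler_pdivlMr // -lerBrDr mulrC.
apply/le_anti/andP; split.
  rewrite -lerBlDr mulrC -ler_pdivrMr //; apply: lb_le_inf => // y Sy.
  by rewrite ler_pdivrMr // mulrC lerBlDr; apply: ge_inf lb' _ (SS' _ Sy).
apply: lb_le_inf; first by case: ne => y /SS'; exists (k * y + e).
by move=> x; rewrite S'E => /(ge_inf lb); rewrite ler_pdivlMr // -lerBrDr mulrC.
Qed.

Lemma quantile_affine (Z : {RV P >-> R}) (l k e : R) : 0 < tau < 1 ->
  (forall om, l <= Z om) -> 0 <= k ->
  quantile P tau (fun om => k * Z om + e) = k * quantile P tau Z + e.
Proof.
case/andP=> tau_gt0 tau_lt1 Zl; rewrite le_eqVlt => /predU1P[<-|k_gt0].
  under eq_fun do rewrite mul0r add0r.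
  by rewrite quantile_cst ?tau_gt0 ?ltW // mul0r add0r.
apply: quantile_pos_affine => //; first exact: quantile_set_neq0.
by exists l; apply: quantile_set_lbound.
Qed.

End Quantile.

Lemma convex_comb_gt0 (R : numDomainType) (a q b : R) : 0 <= a <= 1 ->
  0 < q -> 0 < b -> 0 < a * q + (1 - a) * b.
Proof.
case/andP=> a_ge0 a_le1 q_gt0 b_gt0; rewrite le_eqVlt in a_le1.
case/predU1P: a_le1 => [->|a_lt1]; first by rewrite mul1r subrr mul0r addr0.
apply: ltr_wpDl; first by rewrite mulr_ge0 // ltW.
by rewrite mulr_gt0 // subr_gt0.
Qed.

Lemma convex_comb_le_max (R : realDomainType) (a q b : R) : 0 <= a <= 1 ->
  a * q + (1 - a) * b <= Num.max q b.
Proof.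
case/andP=> a_ge0 a_le1.
apply: (@le_trans _ _ (a * Num.max q b + (1 - a) * Num.max q b)).
  by rewrite lerD // ler_wpM2l ?subr_ge0 // le_max lexx ?orbT.
by rewrite -mulrDl addrC subrK mul1r.
Qed.

Lemma convex_comb_eq_max (R : realFieldType) (a q b : R) : 0 <= a <= 1 ->
  a * q + (1 - a) * b = Num.max q b <-> (b < q -> a = 1) /\ (q < b -> a = 0).
Proof.
case/andP=> a_ge0 a_le1; rewrite /Num.max /Order.max.
have [q_lt_b|b_lt_q|<-] := ltgtP q b.
- split=> [e|[_ /(_ isT) a0]]; last by rewrite a0; lra.
  split=> // _; have : a * (q - b) = 0 by rewrite mulrBr; lra.
  by move/eqP; rewrite mulf_eq0 subr_eq0 (lt_eqF q_lt_b) orbF => /eqP.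
- split=> [e|[/(_ isT) a1 _]]; last by rewrite a1; lra.
  split=> // _; have : (1 - a) * (q - b) = 0 by rewrite mulrBr; lra.
  by move/eqP; rewrite mulf_eq0 !subr_eq0 (gt_eqF b_lt_q) orbF => /eqP; lra.
- by split=> // _; lra.
Qed.

Lemma sup_convex_comb (R : realType) (c q b : R) : 0 < c ->
  sup [set y : R | exists2 a : R, 0 <= a <= 1 & y = c * (a * q + (1 - a) * b)]
  = c * Num.max q b.
Proof.
move=> c_gt0; set S := [set y | _].
have ubS : ubound S (c * Num.max q b).
  by move=> _ [a a01 ->]; rewrite ler_pM2l // convex_comb_le_max.
have [a a01 maxE] :
    exists2 a : R, 0 <= a <= 1 & a * q + (1 - a) * b = Num.max q b.
  have [_|_] := leP q b; [exists 0 | exists 1]; rewrite ?ler01 ?lexx //.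
    by rewrite mul0r add0r subr0 mul1r.
  by rewrite mul1r subrr mul0r addr0.
apply/le_anti; rewrite ge_sup //=.
  by rewrite ub_le_sup //; [exists (c * Num.max q b) | exists a; rewrite ?maxE].
by exists (c * Num.max q b), a; rewrite ?maxE.
Qed.

Section ValueFunction.
Variables (R : realType) (d : measure_display) (Om : measurableType d)
  (P : probability Om R) (Tn : nat) (tau beta Rf : R)
  (Rs : nat -> {RV P >-> R}).
Hypotheses (tau01 : 0 < tau < 1) (beta_gt0 : 0 < beta) (Rf_gt0 : 0 < Rf)
  (Rs_gt0 : forall k, (1 <= k <= Tn)%N -> forall om, 0 < Rs k om).

Definition growth (k : nat) : R := Num.max (quantile P tau (Rs k)) Rf.

Definition vfactor (n : nat) : R :=
  beta ^+ n * \prod_((Tn - n).+1 <= k < Tn.+1) growth k.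

Lemma growth_gt0 k : 0 < growth k.
Proof. by rewrite lt_max Rf_gt0 orbT. Qed.

Lemma vfactor_gt0 n : 0 < vfactor n.
Proof.
by rewrite mulr_gt0 ?exprn_gt0 // prodr_gt0 // => k _; apply: growth_gt0.
Qed.

Lemma vfactor_scale_gt0 n w : 0 < w -> 0 < beta * vfactor n * w.
Proof. by move=> w_gt0; rewrite mulr_gt0 // mulr_gt0 // vfactor_gt0. Qed.

Lemma vfactorS n : (n < Tn)%N ->
  vfactor n.+1 = beta * vfactor n * growth (Tn - n).
Proof.
move=> n_lt_Tn; rewrite /vfactor exprS subnSK // big_ltn ?ltnS ?leq_subr //.
by rewrite [growth _ * _]mulrC !mulrA.
Qed.

Lemma quantile_vrem n w a : (n < Tn)%N -> 0 < w -> 0 <= a <= 1 ->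
  (forall x, 0 < x -> vrem Tn tau beta Rf Rs n x = vfactor n * x) ->
  quantile P tau (fun om => beta * vrem Tn tau beta Rf Rs n
      (w * (a * Rs (Tn - n) om + (1 - a) * Rf)))
  = beta * vfactor n * w * (a * quantile P tau (Rs (Tn - n)) + (1 - a) * Rf).
Proof.
move=> n_lt_Tn w_gt0 a01 vremE.
have Rs_pos om : 0 < Rs (Tn - n) om.
  by rewrite Rs_gt0 // subn_gt0 n_lt_Tn leq_subr.
have -> : (fun om => beta * vrem Tn tau beta Rf Rs n
                        (w * (a * Rs (Tn - n) om + (1 - a) * Rf))) =
          (fun om => beta * vfactor n * w * a * Rs (Tn - n) om
                     + beta * vfactor n * w * ((1 - a) * Rf)).
  apply: funext => om; rewrite vremE ?mulr_gt0 ?convex_comb_gt0 //.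
  by rewrite !mulrDr !mulrA.
rewrite (quantile_affine _ _ (fun om => ltW (Rs_pos om))) //.
  by rewrite [RHS]mulrDr [in RHS]mulrA.
by case/andP: a01 => a_ge0 _; rewrite mulr_ge0 // ltW // vfactor_scale_gt0.
Qed.

Lemma vrem_linear n : (n <= Tn)%N ->
  forall x, 0 < x -> vrem Tn tau beta Rf Rs n x = vfactor n * x.
Proof.
elim: n => [_ x _|n IH n_lt_Tn x x_gt0].
  by rewrite /vfactor /= subn0 big_geq // expr0 !mul1r.
have vremE y : 0 < y -> vrem Tn tau beta Rf Rs n y = vfactor n * y.
  exact/IH/ltnW.
rewrite /= (_ : [set y | _] = [set y | exists2 a : R, 0 <= a <= 1 &
    y = beta * vfactor n * x *
        (a * quantile P tau (Rs (Tn - n)) + (1 - a) * Rf)]).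
  rewrite sup_convex_comb ?(vfactor_scale_gt0 n x_gt0) //.
  by rewrite vfactorS // mulrAC.
by apply/seteqP; split=> y [a a01 ->]; exists a; rewrite ?quantile_vrem.
Qed.
End ValueFunction.

Theorem mainTheorem4 (R : realType) (d : measure_display) (Om : measurableType d)
  (P : probability Om R) (Tn : nat) (tau beta Rf : R)
  (Rs : nat -> {RV P >-> R}) :
  (1 <= Tn)%N -> 0 < tau < 1 -> 0 < beta < 1 -> 0 < Rf ->
  mutually_independent Tn Rs ->
  (forall k, (1 <= k <= Tn)%N -> forall om, 0 < Rs k om) ->
  forall t : nat, (t < Tn)%N -> forall w : R, 0 < w ->
    vstar Tn tau beta Rf Rs t w =
      beta ^+ (Tn - t) * w *
        \prod_(t.+1 <= k < Tn.+1) Num.max (quantile P tau (Rs k)) Rf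
    /\ (forall a : R, 0 <= a <= 1 ->
         (objective Tn tau beta Rf Rs t a w = vstar Tn tau beta Rf Rs t w <->
          ((Rf < quantile P tau (Rs t.+1) -> a = 1) /\
           (quantile P tau (Rs t.+1) < Rf -> a = 0)))).
Proof.
(* Independence is already built into [vrem], which conditions on W_t = w by
   substituting the constant w. *)
move=> _ tau01 /andP[beta_gt0 _] Rf_gt0 _ Rs_gt0 t t_lt_Tn w w_gt0.
have vremE := vrem_linear tau01 beta_gt0 Rf_gt0 Rs_gt0.
split=> [|a a01].
  rewrite /vstar vremE ?leq_subr //.
  by rewrite /vfactor (subKn (ltnW t_lt_Tn)) mulrAC.
have [n n_lt_Tn ->] : exists2 n, (n < Tn)%N & t = (Tn - n.+1)%N.
  exists (Tn - t.+1)%N; first by rewrite ltn_subrL (leq_ltn_trans _ t_lt_Tn).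
  by rewrite subnSK // (subKn (ltnW t_lt_Tn)).
rewrite /objective /vstar subnSK // (subKn (ltnW n_lt_Tn)) (subKn n_lt_Tn).
rewrite quantile_vrem // => [|x x_gt0]; last by rewrite vremE // ltnW.
rewrite vremE // vfactorS // [RHS]mulrAC.
apply: iff_trans (convex_comb_eq_max _ _ a01).
by split=> [/mulfI|->//]; apply; rewrite gt_eqF // vfactor_scale_gt0.
Qed.
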